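(* For every $\varepsilon>0$ there exists $\delta>0$ such that for all positive integers $k\leqslant d$ with $k\leqslant (1-\varepsilon)d$, $$n(k,d)\leqslant (2-\delta)^d.$$
   Context: A standard box in $\mathbb{R}^d$ is a set $K=K_1\times\cdots\times K_d$ where each $K_i\subset\mathbb{R}$ is a closed interval. For integers $1\leqslant k\leqslant d$, two standard boxes $K,L\subset\mathbb{R}^d$ are $k$-neighborly if $d-k\leqslant \dim(K\cap L)\leqslant d-1$, and a family of standard boxes is $k$-neighborly if every two distinct members are $k$-neighborly. $n(k,d)$ denotes the maximum possible cardinality of a $k$-neighborly family of standard boxes in $\mathbb{R}^d$. *)

From mathcomp Require Import all_boot all_order all_algebra.
From mathcomp Require Import reals.
Set Implicit Arguments. Unset Strict Implicit. Unset Printing Implicit Defensive.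
Import Order.TTheory GRing.Theory Num.Theory.
Local Open Scope ring_scope.

Record box (R : realType) (d : nat) := Box {
  lo : 'I_d -> R;
  hi : 'I_d -> R;
  lo_lt_hi : forall i, lo i < hi i }.

Definition inter_nonempty (R : realType) d (K L : box R d) : bool :=
  [forall i, Num.max (lo K i) (lo L i) <= Num.min (hi K i) (hi L i)].

Definition inter_dim (R : realType) d (K L : box R d) : nat :=
  #|[pred i : 'I_d | Num.max (lo K i) (lo L i) < Num.min (hi K i) (hi L i)]|.

(* K and L are k-neighborly: d - k <= dim (K ∩ L) <= d - 1
   (an empty intersection has dimension -1 < d - k, so it is excluded). *)
Definition k_neighborly (R : realType) (k d : nat) (K L : box R d) : Prop :=
  inter_nonempty K L /\ (d - k <= inter_dim K L)%N /\ (inter_dim K L <= d - 1)%N.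

Definition neighborly_family (R : realType) (k d m : nat) (F : 'I_m -> box R d)
  : Prop :=
  injective F /\ forall i j : 'I_m, i != j -> k_neighborly k (F i) (F j).

(* "n(k,d) <= x": every k-neighborly family of standard boxes in R^d has
   cardinality at most x. *)
Definition n_le (R : realType) (k d : nat) (x : R) : Prop :=
  forall (m : nat) (F : 'I_m -> box R d), neighborly_family k F -> m%:R <= x.

(* In every coordinate i let p_i be the largest left endpoint of a box of the
   family. Pairwise intersecting closed intervals share p_i, so each box is
   encoded by a word over {0, 1, *}: 0 where its side ends at p_i, 1 where it
   starts at p_i, * where p_i is interior. Two boxes then meet in dimension d
   minus the number of positions where their words carry opposite digits, so
   the words of a k-neighborly family describe pairwise disjoint subcubes of
   {0,1}^d any two of which conflict in at most k positions. Words with at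
   least J stars are few, since disjoint subcubes have total volume at most
   2^d. Filling the stars of the remaining words with 0 yields a set A of
   binary words of diameter at most k + 2J; the Talagrand-type inequality |A|
   sum_x q^dist(x,A) <= (2 + q + 1/q)^d, compared with the bound dist(x,A) +
   dist(-x,A) >= d - k - 2J at antipodal points, makes A exponentially small
   for q close to 1. The constant factors are removed by applying the estimate
   to tensor powers of the family. *)

From mathcomp Require Import all_boot all_order all_algebra.
From mathcomp Require Import reals.
From mathcomp Require Import zify ring lra.
Import Order.TTheory GRing.Theory Num.Theory.
Set Implicit Arguments. Unset Strict Implicit. Unset Printing Implicit Defensive.

Section Slices.
Variable T : eqType.
Implicit Types (h : T) (t u : seq T) (F : seq (seq T)).

Definition unprefix h u : option (seq T) :=
  if u is a :: t then if a == h then Some t else None else None.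

Definition slice h F : seq (seq T) := pmap (unprefix h) F.

Lemma unprefixK h : ocancel (unprefix h) (cons h).
Proof. by case=> [|a t] //=; case: eqP => [->|]. Qed.

Lemma consK h : pcancel (cons h) (unprefix h).
Proof. by move=> t /=; rewrite eqxx. Qed.

Lemma mem_slice h F t : (t \in slice h F) = (h :: t \in F).
Proof. by rewrite (can2_mem_pmap (unprefixK h) (consK h)). Qed.

Lemma slice_uniq h F : uniq F -> uniq (slice h F).
Proof. exact: (@pmap_uniq _ _ _ _ (unprefixK h) F). Qed.

Lemma size_slice_mem d h F : {in F, forall u, size u = d.+1} ->
  {in slice h F, forall t, size t = d}.
Proof. by move=> Fd t; rewrite mem_slice => /Fd []. Qed.

End Slices.

Lemma big_slices (T : finType) (R : Type) (idx : R) (op : Monoid.com_law idx)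
    (F : seq (seq T)) (f : seq T -> R) : [::] \notin F ->
  \big[op/idx]_(u <- F) f u = \big[op/idx]_(h : T) \big[op/idx]_(t <- slice h F) f (h :: t).
Proof.
move=> F_nil; under [RHS]eq_bigr do rewrite big_pmap.
rewrite exchange_big [LHS]big_seq [RHS]big_seq; apply: eq_bigr => -[|a t] uF.
  by rewrite uF in F_nil.
rewrite (bigD1 a) //= eqxx big1 ?Monoid.mulm1 // => h /negPf ha.
by rewrite eq_sym ha.
Qed.

(* A word over {0, 1, *} is a [seq (option bool)], [None] being the star; it
   stands for the subcube of {0,1}^d formed by its completions. *)
Definition conflict (a b : option bool) : bool :=
  if (a, b) is (Some x, Some y) then x != y else false.

Fixpoint conflicts (u v : seq (option bool)) : nat :=
  match u, v with a :: u', b :: v' => conflict a b + conflicts u' v' | _, _ => 0 end.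

Definition stars (u : seq (option bool)) : nat := count_mem None u.

Lemma conflicts_refl u : conflicts u u = 0.
Proof. by elim: u => //= -[[]|] u ->. Qed.

Lemma conflicts_le_size u v : conflicts u v <= size u.
Proof. by elim: u v => [|a u IH] [|b v] //=; rewrite -add1n leq_add ?IH ?leq_b1. Qed.

Lemma conflicts_cat u1 u2 v1 v2 : size u1 = size v1 ->
  conflicts (u1 ++ u2) (v1 ++ v2) = conflicts u1 v1 + conflicts u2 v2.
Proof. by elim: u1 v1 => [|a u IH] [|b v] //= [] /IH ->; rewrite addnA. Qed.

Definition disjoint_subcubes d (F : seq (seq (option bool))) : Prop :=
  [/\ uniq F, {in F, forall u, size u = d} &
      {in F &, forall u v, u != v -> 0 < conflicts u v}].

Lemma disjoint_subcubes_slices d b F : disjoint_subcubes d.+1 F ->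
  disjoint_subcubes d (slice (Some b) F ++ slice None F).
Proof.
move=> [F_uniq F_size F_conf]; have slice_size h := size_slice_mem (h := h) F_size.
have head_of t : t \in slice (Some b) F ++ slice None F ->
    exists2 a, a \in [:: Some b; None] & a :: t \in F.
  by rewrite mem_cat !mem_slice => /orP[]; [exists (Some b) | exists None];
    rewrite ?inE ?eqxx ?orbT.
split.
- rewrite cat_uniq !slice_uniq // andbT; apply/hasPn => t; rewrite !mem_slice => tN.
  by apply/negP => /F_conf/(_ tN); rewrite /= conflicts_refl => /(_ isT).
- by move=> t; rewrite mem_cat => /orP[] /slice_size.
- move=> t t' /head_of[a ab atF] /head_of[c cb ct'F] tt'.
  have no_conflict a' c' : a' \in [:: Some b; None] -> c' \in [:: Some b; None] ->
      conflict a' c' = false.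
    by case: a' c' => [[]|] [[]|]; case: (b); rewrite !inE.
  have -> : conflicts t t' = conflicts (a :: t) (c :: t') by rewrite /= no_conflict.
  by apply: F_conf => //; apply: contra tt' => /eqP[_ ->].
Qed.

Lemma sum_exp_stars_le d F : disjoint_subcubes d F -> \sum_(u <- F) 2 ^ stars u <= 2 ^ d.
Proof.
elim: d F => [|d IH] F.
  move=> [F_uniq F_size _].
  have F_sub : {subset F <= [:: [::]]} by move=> u /F_size /size0nil ->; exact: mem_head.
  rewrite big_seq (eq_bigr (fun=> 1)) => [|u /F_sub]; last by rewrite mem_seq1 => /eqP->.
  by rewrite -big_seq sum1_size (uniq_leq_size F_uniq F_sub).
move=> HF; have [_ F_size _] := HF.
have F_nil : [::] \notin F by apply/negP => /F_size.
have IHb b : \sum_(t <- slice (Some b) F) 2 ^ stars t +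
    \sum_(t <- slice None F) 2 ^ stars t <= 2 ^ d.
  by rewrite -big_cat; exact: IH (disjoint_subcubes_slices b HF).
have stars_cons h t : 2 ^ stars (h :: t) = (h == None).+1 * 2 ^ stars t.
  by rewrite /stars /= expnD; case: eqP.
rewrite big_slices //.
under eq_bigr => h _ do rewrite (eq_bigr _ (fun t _ => stars_cons h t)) -big_distrr.
rewrite (bigD1 None) // (bigD1 (Some true)) // (bigD1 (Some false)) //.
rewrite [\sum_(i | _) _]big_pred0 /=; last by case=> [[]|].
rewrite !mul1n addn0 mul2n -addnn addnACA expnS mul2n -addnn.
by apply: leq_add; rewrite addnC; [exact (IHb true) | exact (IHb false)].
Qed.

Fixpoint hamming (x y : seq bool) : nat :=
  match x, y with a :: x', b :: y' => (a != b) + hamming x' y' | _, _ => 0 end.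

Lemma hamming_refl x : hamming x x = 0.
Proof. by elim: x => //= a x ->; rewrite eqxx. Qed.

Lemma hamming_le_size x y : hamming x y <= size x.
Proof. by elim: x y => [|a x IH] [|b y] //=; rewrite -add1n leq_add ?IH ?leq_b1. Qed.

Lemma hamming_map_negb x y : size x = size y ->
  hamming (map negb x) y = size x - hamming x y.
Proof.
elim: x y => [|a x IH] [|b y] //= [] /IH ->; have := hamming_le_size x y.
by case: a; case: b => /=; lia.
Qed.

Lemma hamming_triangle x y z : size x = size y -> size y = size z ->
  hamming x z <= hamming x y + hamming y z.
Proof.
elim: x y z => [|a x IH] [|b y] [|c z] //= [] xy [] yz.
by have := IH _ _ xy yz; case: a; case: b; case: c => /=; lia.
Qed.

Definition dist_to (x : seq bool) (A : seq (seq bool)) : nat :=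
  \big[minn/size x]_(a <- A) hamming x a.

Lemma dist_to_le_size x A : dist_to x A <= size x.
Proof.
by rewrite /dist_to; elim: A => [|a A IH]; rewrite ?big_nil ?big_cons ?geq_min ?IH ?orbT.
Qed.

Lemma dist_to_le x A a : a \in A -> dist_to x A <= hamming x a.
Proof.
rewrite /dist_to; elim: A => //= b A IH; rewrite inE big_cons.
by case/predU1P => [->|/IH]; [exact: geq_minl | apply: leq_trans; exact: geq_minr].
Qed.

Lemma dist_to_attained x A : A != [::] ->
  exists2 a, a \in A & dist_to x A = hamming x a.
Proof.
rewrite /dist_to; elim: A => //= b A IH _; rewrite big_cons.
have [->|/IH [a aA ->]] := eqVneq A [::].
  by exists b; rewrite ?mem_seq1 // big_nil; apply/minn_idPl/hamming_le_size.
by case: leqP => _; [exists b; rewrite ?mem_head | exists a; rewrite // inE aA orbT].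
Qed.

Fixpoint cube d : seq (seq bool) :=
  if d is d'.+1 then map (cons false) (cube d') ++ map (cons true) (cube d')
  else [:: [::]].

Lemma size_cube d : size (cube d) = 2 ^ d.
Proof. by elim: d => //= d IH; rewrite size_cat !size_map IH expnS mul2n addnn. Qed.

Lemma size_mem_cube d x : x \in cube d -> size x = d.
Proof.
elim: d x => [|d IH] x /=; first by rewrite mem_seq1 => /eqP->.
by rewrite mem_cat => /orP[] /mapP[y /IH <- ->].
Qed.

Section CubeSums.
Variable R : nmodType.
Local Open Scope ring_scope.

Lemma big_cube_cons d (f : seq bool -> R) :
  \sum_(x <- cube d.+1) f x =
    \sum_(x <- cube d) f (false :: x) + \sum_(x <- cube d) f (true :: x).
Proof. by rewrite /= big_cat !big_map. Qed.

Lemma big_cube_negb d (f : seq bool -> R) :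
  \sum_(x <- cube d) f (map negb x) = \sum_(x <- cube d) f x.
Proof.
elim: d f => [|d IH] f; first by rewrite !big_seq1.
rewrite !big_cube_cons addrC.
by rewrite (IH (fun x => f (true :: x))) (IH (fun x => f (false :: x))).
Qed.

End CubeSums.

Lemma dist_to_cons_slice b x A : slice b A != [::] ->
  dist_to (b :: x) A <= dist_to x (slice b A).
Proof.
case/(dist_to_attained x) => t; rewrite mem_slice => /dist_to_le/leq_trans + ->.
by apply; rewrite /= eqxx.
Qed.

Lemma dist_to_cons_behead b x A : A != [::] -> [::] \notin A ->
  dist_to (b :: x) A <= (dist_to x (undup (map behead A))).+1.
Proof.
move=> A_nonempty A_nil.
have : undup (map behead A) != [::].
  by apply: contraNneq A_nonempty => /undup_nil; case: (A).
case/(dist_to_attained x) => t; rewrite mem_undup => /mapP[[|c t'] uA ->] ->.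
  by rewrite uA in A_nil.
by apply: leq_trans (dist_to_le _ uA) _; rewrite /= -add1n leq_add2r leq_b1.
Qed.

Lemma size_slices_bool (A : seq (seq bool)) : [::] \notin A ->
  size A = size (slice false A) + size (slice true A).
Proof.
by move=> A_nil; rewrite -!sum1_size (big_slices _ (fun=> 1%N)) // big_bool addnC.
Qed.

Lemma dist_to_negb_ge x D A : A != [::] -> {in A, forall a, size a = size x} ->
  {in A &, forall a b, hamming a b <= D} ->
  size x - D <= dist_to x A + dist_to (map negb x) A.
Proof.
move=> A_nonempty A_size A_diam.
have [a aA ->] := dist_to_attained x A_nonempty.
have [b bA ->] := dist_to_attained (map negb x) A_nonempty.
rewrite hamming_map_negb ?A_size //.
have := hamming_triangle (esym (A_size a aA)) (etrans (A_size a aA) (esym (A_size b bA))).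
by have := A_diam a b aA bA; have := hamming_le_size x b; lia.
Qed.

Definition neighborly_subcubes k d (F : seq (seq (option bool))) : Prop :=
  disjoint_subcubes d F /\ {in F &, forall u v, conflicts u v <= k}.

Definition fill_stars (u : seq (option bool)) : seq bool := map (odflt false) u.

Lemma hamming_fill_stars u v : size u = size v ->
  conflicts u v <= hamming (fill_stars u) (fill_stars v)
    <= conflicts u v + stars u + stars v.
Proof.
elim: u v => [|a u IH] [|b v] //= [] /IH; rewrite /stars /=.
by case: a => [[]|]; case: b => [[]|] /=; lia.
Qed.

Lemma count_many_stars_le d J F : disjoint_subcubes d F ->
  count (fun u => J <= stars u) F * 2 ^ J <= 2 ^ d.
Proof.
move=> /sum_exp_stars_le; apply: leq_trans.
rewrite -sum1_count big_distrl big_mkcond /=; apply: leq_sum => u _.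
by case: ifP => // J_le; rewrite mul1n leq_exp2l.
Qed.

Definition tensor (F G : seq (seq (option bool))) : seq (seq (option bool)) :=
  [seq u ++ v | u <- F, v <- G].

Lemma neighborly_subcubes_tensor k1 d1 F k2 d2 G :
  neighborly_subcubes k1 d1 F -> neighborly_subcubes k2 d2 G ->
  neighborly_subcubes (k1 + k2) (d1 + d2) (tensor F G).
Proof.
move=> [[F_uniq F_size F_conf] F_le] [[G_uniq G_size G_conf] G_le].
have conflicts_tensor u u' v v' : u \in F -> u' \in F ->
    conflicts (u ++ v) (u' ++ v') = conflicts u u' + conflicts v v'.
  by move=> uF u'F; rewrite conflicts_cat // !F_size.
split; first split.
- apply: allpairs_uniq => // -[u v] [u' v'] /allpairsP[[a b] /= [aF bG [-> ->]]].
  move=> /allpairsP[[a' b'] /= [a'F b'G [-> ->]]] /= /eqP.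
  by rewrite eqseq_cat ?F_size // => /andP[/eqP-> /eqP->].
- by move=> _ /allpairsP[[u v] /= [uF vG ->]]; rewrite size_cat F_size ?G_size.
- move=> _ _ /allpairsP[[u v] /= [uF vG ->]] /allpairsP[[u' v'] /= [u'F v'G ->]] neq.
  rewrite conflicts_tensor //; have [uu'|/(F_conf _ _ uF u'F)] := eqVneq u u'.
    by rewrite uu' conflicts_refl G_conf //; apply: contraNneq neq => ->; rewrite uu'.
  by move/leq_trans; apply; rewrite leq_addr.
- move=> _ _ /allpairsP[[u v] /= [uF vG ->]] /allpairsP[[u' v'] /= [u'F v'G ->]].
  by rewrite conflicts_tensor // leq_add ?F_le ?G_le.
Qed.

Definition tensor_power F t := iter t (tensor F) [:: [::]].

Lemma size_tensor_power F t : size (tensor_power F t) = size F ^ t.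
Proof. by elim: t => //= t IH; rewrite size_allpairs expnS IH. Qed.

Lemma neighborly_subcubes_tensor_power k d F t : neighborly_subcubes k d F ->
  neighborly_subcubes (k * t) (d * t) (tensor_power F t).
Proof.
move=> HF; elim: t => [|t IH]; last by rewrite !mulnS; apply: neighborly_subcubes_tensor.
rewrite !muln0; split; first split => //.
- by move=> u; rewrite mem_seq1 => /eqP->.
- by move=> u v; rewrite !mem_seq1 => /eqP-> /eqP->; rewrite eqxx.
- by move=> u v; rewrite !mem_seq1 => /eqP-> /eqP->.
Qed.

Local Open Scope ring_scope.

Lemma concentration_step (R : realFieldType) (q a0 a1 s T0 T1 X : R) :
  1 <= q -> 0 <= a0 <= s -> 0 <= a1 <= s -> 0 <= T0 -> 0 <= T1 ->
  a0 * T0 <= X -> a1 * T1 <= X -> s * T0 <= q * X -> s * T1 <= q * X ->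
  (a0 + a1) * (T0 + T1) <= (2 + q + q^-1) * X.
Proof.
move=> q1 /andP[a0_ge0 a0s] /andP[a1_ge0 a1s] T0_ge0 T1_ge0.
wlog a10 : a0 a1 T0 T1 a0_ge0 a1_ge0 a0s a1s T0_ge0 T1_ge0 / a1 <= a0.
  move=> W aT0 aT1 sT0 sT1; have [a10|/ltW a01] := lerP a1 a0; first exact: (W a0 a1 T0 T1).
  by rewrite [a0 + _]addrC [T0 + _]addrC; apply: (W a1 a0 T1 T0).
move=> aT0 aT1 sT0 sT1; have q_gt0 : 0 < q by lra.
rewrite (_ : (2 + q + q^-1) * X = (q + 1) ^+ 2 * X / q); last by field; lra.
rewrite ler_pdivlMr //.
(* Either the larger block alone controls both sums, or a0 / a1 lies in [1, q)
   and then (a0 + a1)^2 q <= (q + 1)^2 a0 a1. *)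
have [a1q_le|a1q_gt] := lerP (a1 * q) a0.
  have : a0 * (T0 + T1) <= (1 + q) * X by nra.
  nra.
have a01_gt0 : 0 < a0 * a1 by apply: mulr_gt0; nra.
have X_ge0 : 0 <= X by nra.
have weighted : a0 * a1 * ((a0 + a1) * (T0 + T1)) <= (a0 + a1) ^+ 2 * X.
  have : a1 * (a0 * T0) + a0 * (a1 * T1) <= (a0 + a1) * X by nra.
  move/(ler_wpM2l (addr_ge0 a0_ge0 a1_ge0)).
  by rewrite expr2 -mulrA; congr (_ <= _); ring.
have ratio : q * (a0 + a1) ^+ 2 <= (q + 1) ^+ 2 * (a0 * a1).
  have : 0 <= (q * a0 - a1) * (q * a1 - a0) by apply: mulr_ge0; nra.
  nra.
rewrite -(ler_pM2l a01_gt0); nra.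
Qed.

Lemma sum_pow_dist_to_le (R : realFieldType) (q : R) d A : 1 <= q -> uniq A ->
  {in A, forall a, size a = d} ->
  (size A)%:R * \sum_(x <- cube d) q ^+ dist_to x A <= (2 + q + q^-1) ^+ d.
Proof.
move=> q_ge1; have q_gt0 : 0 < q by lra.
have c_ge0 : 0 <= 2 + q + q^-1 by rewrite !addr_ge0 ?invr_ge0 //; lra.
elim: d A => [|d IH] A A_uniq A_size.
  have : (size A <= 1)%N.
    apply: (uniq_leq_size (s2 := [:: [::]])) => // a /A_size /size0nil ->.
    exact: mem_head.
  have dist0 : dist_to [::] A = 0%N by apply/eqP; rewrite -leqn0 dist_to_le_size.
  by rewrite big_seq1 dist0 !expr0 mulr1 -(ler_nat R).
have [->|A_nonempty] := eqVneq A [::]; first by rewrite mul0r exprn_ge0.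
have A_nil : [::] \notin A by apply/negP => /A_size.
set B := undup (map behead A).
have B_size : {in B, forall t, size t = d}.
  by move=> t; rewrite mem_undup => /mapP[[|c u] /A_size /= [u_size] ->].
have slice_le_B b : (size (slice b A) <= size B)%N.
  apply: uniq_leq_size; first exact: slice_uniq.
  by move=> t; rewrite mem_slice mem_undup => tA; apply/mapP; exists (b :: t).
have slice_bound b :
    (size (slice b A))%:R * \sum_(x <- cube d) q ^+ dist_to (b :: x) A <= (2 + q + q^-1) ^+ d.
  have [->|nonempty] := eqVneq (slice b A) [::]; first by rewrite mul0r exprn_ge0.
  apply: le_trans (IH _ (slice_uniq b A_uniq) (size_slice_mem A_size)).
  apply: ler_wpM2l => //; apply: ler_sum => x _.
  exact/ler_weXn2l/dist_to_cons_slice.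
have B_bound b : (size B)%:R * \sum_(x <- cube d) q ^+ dist_to (b :: x) A
    <= q * (2 + q + q^-1) ^+ d.
  apply: (@le_trans _ _ ((size B)%:R * (q * \sum_(x <- cube d) q ^+ dist_to x B))).
    apply: ler_wpM2l => //; rewrite mulr_sumr; apply: ler_sum => x _; rewrite -exprS.
    exact/ler_weXn2l/dist_to_cons_behead.
  rewrite mulrCA; apply: ler_wpM2l; [lra | exact: IH _ (undup_uniq _) B_size].
rewrite (size_slices_bool A_nil) natrD big_cube_cons exprS.
apply: (concentration_step (s := (size B)%:R)) => //;
  rewrite ?ler_nat ?ler0n ?slice_le_B //; by apply: sumr_ge0 => x _; apply: exprn_ge0; lra.
Qed.

Lemma sum_pow_dist_to_ge (R : realFieldType) (r : R) d D A : 1 <= r -> A != [::] ->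
  {in A, forall a, size a = d} -> {in A &, forall a b, (hamming a b <= D)%N} ->
  2 ^+ d * r ^+ (d - D) <= \sum_(x <- cube d) (r ^+ 2) ^+ dist_to x A.
Proof.
move=> r_ge1 A_nonempty A_size A_diam; have r_ge0 : 0 <= r by lra.
have antipodal x : x \in cube d ->
    2 * r ^+ (d - D) <= (r ^+ 2) ^+ dist_to x A + (r ^+ 2) ^+ dist_to (map negb x) A.
  move=> /size_mem_cube x_size; rewrite -!exprM !(mulnC 2) !exprM.
  set u := r ^+ dist_to x A; set v := r ^+ dist_to (map negb x) A.
  have : r ^+ (d - D) <= u * v.
    rewrite -exprD; apply: ler_weXn2l => //; rewrite -x_size.
    by apply: dist_to_negb_ge => // a /A_size ->.
  have : 0 <= (u - v) ^+ 2 by exact: sqr_ge0.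
  by rewrite !expr2; nra.
rewrite -(ler_pM2l (ltr0n R 2)) [leRHS]mulr_natl [leRHS]mulr2n.
rewrite -{2}(big_cube_negb _ (fun x => (r ^+ 2) ^+ dist_to x A)) -big_split /=.
apply: le_trans (_ : \sum_(x <- cube d) 2 * r ^+ (d - D) <= _).
  rewrite big_const_seq count_predT iter_addr_0 size_cube -[_ *+ (2 ^ d)%N]mulr_natr.
  by rewrite natrX -mulrA [_ * 2 ^+ d]mulrC.
by rewrite big_seq [leRHS]big_seq; apply: ler_sum.
Qed.

Lemma count_few_stars_le (R : realFieldType) (r : R) k d J F : 1 <= r ->
  neighborly_subcubes k d F ->
  (count (fun u => stars u < J)%N F)%:R * 2 ^+ d * r ^+ (d - (k + 2 * J))
    <= (2 + r ^+ 2 + (r ^+ 2)^-1) ^+ d.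
Proof.
move=> r_ge1 [[F_uniq F_size F_conf] F_le].
set A := map fill_stars [seq u <- F | (stars u < J)%N].
have A_size : {in A, forall a, size a = d}.
  by move=> a /mapP[u]; rewrite mem_filter => /andP[_ /F_size <-] ->; rewrite size_map.
have fill_hamming u v : u \in F -> v \in F ->
    (conflicts u v <= hamming (fill_stars u) (fill_stars v)
      <= conflicts u v + stars u + stars v)%N.
  by move=> uF vF; apply: hamming_fill_stars; rewrite F_size ?F_size.
have A_uniq : uniq A.
  rewrite map_inj_in_uniq ?filter_uniq // => u v; rewrite !mem_filter.
  move=> /andP[_ uF] /andP[_ vF] fill_uv; apply/eqP.
  apply: contraT => /(F_conf _ _ uF vF).
  by have := fill_hamming u v uF vF; rewrite fill_uv hamming_refl; lia.
have A_diam : {in A &, forall a b, (hamming a b <= k + 2 * J)%N}.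
  move=> _ _ /mapP[u + ->] /mapP[v + ->].
  rewrite !mem_filter => /andP[su uF] /andP[sv vF].
  by have := fill_hamming u v uF vF; have := F_le u v uF vF; lia.
have -> : count (fun u => stars u < J)%N F = size A by rewrite size_map size_filter.
have [->|A_nonempty] := eqVneq A [::].
  by rewrite !mul0r exprn_ge0 // !addr_ge0 ?invr_ge0 ?sqr_ge0.
rewrite -mulrA; apply: le_trans (sum_pow_dist_to_le (exprn_ege1 2 r_ge1) A_uniq A_size).
exact/ler_wpM2l/sum_pow_dist_to_ge.
Qed.

Lemma bernoulli_ineq (R : realDomainType) (y : R) n : -1 <= y ->
  1 + n%:R * y <= (1 + y) ^+ n.
Proof.
move=> y_ge; elim: n => [|n IH]; first by rewrite mul0r addr0 expr0.
rewrite exprSr -natr1; have : 0 <= n%:R :> R by apply: ler0n.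
have : (1 + n%:R * y) * (1 + y) <= (1 + y) ^+ n * (1 + y) by apply: ler_wpM2r => //; lra.
nra.
Qed.

Lemma ler_of_exprn_le_mul (R : archiRealFieldType) (x y C : R) : 0 <= y ->
  (forall s, x ^+ s <= C * y ^+ s) -> x <= y.
Proof.
move=> y_ge0 bound; rewrite leNgt; apply/negP => y_lt_x.
have [y_gt0|y_le0] := ltrP 0 y; last first.
  have y0 : y = 0 by apply: le_anti; rewrite y_le0 y_ge0.
  by have := bound 1%N; rewrite !expr1 y0 mulr0 leNgt -y0 y_lt_x.
set z := x / y; have z_gt1 : 1 < z by rewrite ltr_pdivlMr // mul1r.
have z_pow s : z ^+ s <= C by rewrite expr_div_n ler_pdivrMr ?exprn_gt0.
have C_ge0 : 0 <= C by have := z_pow 0%N; rewrite expr0; lra.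
have z1_gt0 : 0 < z - 1 by rewrite subr_gt0.
have := archi_boundP (divr_ge0 C_ge0 (ltW z1_gt0)).
set s := Num.bound _; rewrite ltr_pdivrMr // => C_lt.
have := @bernoulli_ineq _ (z - 1) s; rewrite addrCA subrr addr0 => bern.
by have := z_pow s; have := bern (ltW (lt_trans (ltrN10 R) z1_gt0)); lra.
Qed.

Lemma neighborly_subcubes_size_le (R : realFieldType) (r : R) k d J F :
  1 <= r <= 2 -> (k + 3 * J <= d)%N -> neighborly_subcubes k d F ->
  (size F)%:R * r ^+ J <= 2 * ((2 + r ^+ 2 + (r ^+ 2)^-1) / 2) ^+ d.
Proof.
move=> /andP[r_ge1 r_le2] kJd HF; set c := 2 + r ^+ 2 + (r ^+ 2)^-1.
have r_gt0 : 0 < r by lra.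
have c_ge4 : 4 <= c.
  by have := sqr_ge0 (r - r^-1); rewrite sqrrB mulfV ?gt_eqF // /c -exprVn; lra.
have c2_ge2 : 2 <= c / 2 by rewrite ler_pdivlMr //; lra.
rewrite -(count_predC (fun u => J <= stars u)%N) natrD mulrDl.
rewrite [leRHS]mulr_natl [leRHS]mulr2n.
apply: lerD.
  apply: le_trans (_ : (2 ^ d)%:R <= _).
    have := count_many_stars_le J HF.1; rewrite -(ler_nat R) natrM natrX.
    apply: le_trans; apply: ler_wpM2l => //; apply: lerXn2r; rewrite ?nnegrE //; lra.
  by rewrite natrX; apply: lerXn2r; rewrite ?nnegrE //; lra.
rewrite (eq_count (a2 := fun u => stars u < J)%N) => [|u]; last by rewrite /= -ltnNge.
have := count_few_stars_le J r_ge1 HF; rewrite -/c => few.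
rewrite -(ler_pM2r (exprn_gt0 d (ltr0n R 2))) -exprMn divfK ?pnatr_eq0 //.
apply: le_trans few; rewrite mulrAC; apply: ler_wpM2l.
  by rewrite mulr_ge0 ?exprn_ge0.
by apply: ler_weXn2l => //; lia.
Qed.

Lemma neighborly_subcubes_bound (R : archiRealFieldType) (r : R) k d F :
  1 <= r <= 2 -> (k <= d)%N -> neighborly_subcubes k d F ->
  (size F)%:R ^+ 3 * r ^+ (d - k) <= ((2 + r ^+ 2 + (r ^+ 2)^-1) / 2) ^+ (3 * d).
Proof.
move=> r12 kd HF; have r_gt0 : 0 < r by case/andP: r12; lra.
(* Tensor power trick: bound the (3 s)-th tensor power and take s-th roots. *)
apply: (@ler_of_exprn_le_mul _ _ _ 2) => [|s].
  by rewrite exprn_ge0 // divr_ge0 // !addr_ge0 ?invr_ge0 ?sqr_ge0.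
have kJd : (k * (3 * s) + 3 * (s * (d - k)) <= d * (3 * s))%N by nia.
rewrite exprMn -!exprM [((d - k) * s)%N]mulnC.
rewrite [(3 * d * s)%N]mulnAC [(3 * s * d)%N]mulnC.
have := neighborly_subcubes_size_le r12 kJd (neighborly_subcubes_tensor_power (3 * s) HF).
by rewrite size_tensor_power natrX.
Qed.

Lemma bernoulli_upper_ineq (R : realDomainType) (x : R) n : 0 <= x ->
  (1 + x) ^+ n * (1 - n%:R * x) <= 1.
Proof.
move=> x_ge0; elim: n => [|n IH]; first by rewrite expr0 mul0r subr0 mulr1.
rewrite exprSr -mulrA; apply: le_trans IH.
apply: ler_wpM2l; first exact/exprn_ge0/addr_ge0.
have : 0 <= n%:R :> R := ler0n _ _.
by rewrite -natr1; nra.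
Qed.

(* Since 2 + r^2 + r^-2 = (r + 1/r)^2, the quantity (2 + r^2 + r^-2) / 4 is
   cosh^2 (ln r), which is 1 + O((r - 1)^2) near r = 1. *)
Lemma cosh_sq_le (R : realFieldType) (r : R) : 1 <= r ->
  2 + r ^+ 2 + (r ^+ 2)^-1 <= 4 * (1 + (r - 1) ^+ 2).
Proof.
move=> r_ge1; have r2_gt0 : 0 < r ^+ 2 by rewrite exprn_gt0 //; lra.
rewrite -(ler_pM2r r2_gt0) !mulrDl mulVf ?gt_eqF //.
have : 0 <= (r - 1) ^+ 2 * (3 * r + 1) * (r - 1) by rewrite !mulr_ge0 ?sqr_ge0 //; lra.
by rewrite !expr2; nra.
Qed.

Lemma cosh_sq_pow_lt (R : realFieldType) (e : R) n : 0 < e < 1 -> n%:R * e <= 2^-1 ->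
  ((2 + (1 + e) ^+ 2 + ((1 + e) ^+ 2)^-1) / 4) ^+ n < 1 + e.
Proof.
move=> /andP[e_gt0 e_lt1] ne.
apply: (@le_lt_trans _ _ ((1 + e ^+ 2) ^+ n)).
  apply: lerXn2r; rewrite ?nnegrE ?divr_ge0 ?addr_ge0 ?invr_ge0 ?sqr_ge0 //.
  rewrite ler_pdivrMr // mulrC; have := @cosh_sq_le _ (1 + e).
  by rewrite [1 + e - 1]addrC addKr; apply; lra.
set P := (1 + e ^+ 2) ^+ n.
have P_gt0 : 0 < P by rewrite exprn_gt0 //; have := sqr_ge0 e; lra.
have ne2 : n%:R * e ^+ 2 <= e / 2 by rewrite expr2 mulrA; nra.
have : P * (1 - e / 2) <= 1.
  apply: le_trans (bernoulli_upper_ineq n (sqr_ge0 e)); apply: ler_wpM2l; lra.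
nra.
Qed.

Lemma exists_pow_gap (R : realFieldType) (sigma : R) n : (0 < n)%N ->
  0 <= sigma < 2 ^+ n -> exists2 delta, 0 < delta <= 2 & sigma <= (2 - delta) ^+ n.
Proof.
move=> n_gt0 /andP[sigma_ge0 sigma_lt].
have pow_gt0 : 0 < 2 ^+ n :> R by rewrite exprn_gt0.
set t := sigma / 2 ^+ n; have t_ge0 : 0 <= t by rewrite divr_ge0 // ltW.
have t_lt1 : t < 1 by rewrite ltr_pdivrMr // mul1r.
have n_ge1 : 1 <= n%:R :> R by rewrite ler1n.
set y := (1 - t) / n%:R.
have ny : n%:R * y = 1 - t by rewrite mulrC divfK // pnatr_eq0 -lt0n.
have y_gt0 : 0 < y by rewrite divr_gt0 ?ltr0n //; lra.
have y_le1 : y <= 1 by nra.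
exists (2 * y); first by apply/andP; split; lra.
have := @bernoulli_ineq _ (- y) n; rewrite mulrN ny opprB addrCA subrr addr0 => bern.
have -> : 2 - 2 * y = 2 * (1 - y) by rewrite mulrBr mulr1.
rewrite exprMn -(divfK (lt0r_neq0 pow_gt0) sigma) -/t mulrC ler_wpM2l ?(ltW pow_gt0) //.
by apply: bern; lra.
Qed.

Lemma neighborly_subcubes_size_pow_le (R : archiRealFieldType) (r : R) N k d F :
  1 <= r <= 2 -> (k <= d)%N -> (d <= N * (d - k))%N -> neighborly_subcubes k d F ->
  (size F)%:R ^+ (3 * N) <= (((2 + r ^+ 2 + (r ^+ 2)^-1) / 2) ^+ (3 * N) / r) ^+ d.
Proof.
move=> r12 kd dk HF; have r_ge1 : 1 <= r by case/andP: r12.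
have r_gt0 : 0 < r by lra.
set c2 := (2 + r ^+ 2 + (r ^+ 2)^-1) / 2.
have c2_ge0 : 0 <= c2 by rewrite divr_ge0 // !addr_ge0 ?invr_ge0 ?sqr_ge0.
have bound : ((size F)%:R ^+ 3 * r ^+ (d - k)) ^+ N <= (c2 ^+ (3 * d)) ^+ N.
  apply: lerXn2r; rewrite ?nnegrE ?mulr_ge0 ?exprn_ge0 ?ler0n ?(ltW r_gt0) //.
  exact: neighborly_subcubes_bound.
rewrite exprMn -!exprM in bound.
rewrite expr_div_n ler_pdivlMr ?exprn_gt0 // -exprM.
apply: le_trans (_ : _ <= (size F)%:R ^+ (3 * N) * r ^+ ((d - k) * N)) _.
  by apply: ler_wpM2l; [exact/exprn_ge0/ler0n | apply: ler_weXn2l; rewrite // mulnC].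
by rewrite [(3 * N * d)%N]mulnAC.
Qed.

Lemma neighborly_subcubes_exp_bound (R : archiRealFieldType) N : (0 < N)%N ->
  exists2 delta : R, 0 < delta <= 2 &
    forall k d F, (k <= d)%N -> (d <= N * (d - k))%N -> neighborly_subcubes k d F ->
      (size F)%:R <= (2 - delta) ^+ d.
Proof.
move=> N_gt0; have n_gt0 : (0 < 3 * N)%N by rewrite muln_gt0 N_gt0.
set e : R := (3 * N)%:R^-1 / 2; set r := 1 + e.
have e_gt0 : 0 < e by rewrite divr_gt0 ?invr_gt0 ?ltr0n.
have ne : (3 * N)%:R * e = 2^-1 by rewrite /e mulrA mulfV ?mul1r // pnatr_eq0 -lt0n.
have e_lt1 : e < 1.
  have : 1 <= (3 * N)%:R :> R by rewrite ler1n.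
  nra.
have r12 : 1 <= r <= 2 by rewrite /r; apply/andP; split; lra.
set c := 2 + r ^+ 2 + (r ^+ 2)^-1; set sigma := (c / 2) ^+ (3 * N) / r.
have c_ge0 : 0 <= c by rewrite !addr_ge0 ?invr_ge0 ?sqr_ge0.
have sigma_bounds : 0 <= sigma < 2 ^+ (3 * N).
  rewrite divr_ge0 ?exprn_ge0 ?divr_ge0 //=; last lra.
  rewrite ltr_pdivrMr; last lra.
  rewrite (_ : c / 2 = 2 * (c / 4)); last by field.
  by rewrite exprMn ltr_pM2l ?exprn_gt0 //; apply: cosh_sq_pow_lt; rewrite ?e_gt0 ?ne.
have [delta delta02 sigma_le] := exists_pow_gap n_gt0 sigma_bounds.
exists delta => // k d F kd dk HF; have [_ delta_le2] := andP delta02.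
rewrite -(ler_pXn2r n_gt0) ?nnegrE ?ler0n ?exprn_ge0 ?subr_ge0 //.
apply: le_trans (neighborly_subcubes_size_pow_le r12 kd dk HF) _; rewrite [leRHS]exprAC.
by apply: lerXn2r; rewrite ?nnegrE ?exprn_ge0 ?subr_ge0 //; case/andP: sigma_bounds.
Qed.

Lemma lt_through (R : numDomainType) (x p y : R) : x <= p -> p <= y ->
  (x < y) = (x != p) || (y != p).
Proof.
move=> xp py; have [->|xnp] := eqVneq x p; have [->|ynp] := eqVneq y p => /=.
- by rewrite ltxx.
- by rewrite lt_neqAle eq_sym ynp py.
- by rewrite lt_neqAle xnp xp.
- by apply: lt_le_trans py; rewrite lt_neqAle xnp.
Qed.

Lemma conflicts_map (T : Type) (f g : T -> option bool) s :
  conflicts (map f s) (map g s) = count (fun i => conflict (f i) (g i)) s.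
Proof. by elim: s => //= a s ->. Qed.

Lemma count_enum (T : finType) (P : pred T) : count P (enum T) = #|[pred i | P i]|.
Proof.
by rewrite cardE /enum_mem size_filter -enumT (@eq_filter _ _ predT) // filter_predT.
Qed.

Section BoxWords.
Variables (R : realType) (k d m : nat) (F : 'I_m.+1 -> box R d).
Hypothesis HF : neighborly_family k F.

Definition pivot (i : 'I_d) : R := lo (F [arg max_(j > ord0) lo (F j) i]%O) i.

Lemma lo_le_pivot j i : lo (F j) i <= pivot i.
Proof. by rewrite /pivot; case: arg_maxP => // j0 _; apply. Qed.

Lemma pivot_le_hi j i : pivot i <= hi (F j) i.
Proof.
rewrite /pivot; set j0 := [arg max_(j > ord0) _]%O.
have [<-|neq] := eqVneq j0 j; first exact/ltW/lo_lt_hi.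
have /forallP/(_ i) := (HF.2 _ _ neq).1.
by rewrite ge_max !le_min => /andP[/andP[_ ->]].
Qed.

Definition box_letter (K : box R d) (i : 'I_d) : option bool :=
  if hi K i == pivot i then Some false
  else if lo K i == pivot i then Some true else None.

Definition box_word (K : box R d) : seq (option bool) :=
  [seq box_letter K i | i <- enum 'I_d].

Lemma inter_side_lt a b i :
  (Num.max (lo (F a) i) (lo (F b) i) < Num.min (hi (F a) i) (hi (F b) i))
  = ~~ conflict (box_letter (F a) i) (box_letter (F b) i).
Proof.
rewrite gt_max !lt_min !lo_lt_hi /= andbT.
rewrite !(lt_through (lo_le_pivot _ i) (pivot_le_hi _ i)).
have := lt_through (lo_le_pivot a i) (pivot_le_hi a i); rewrite lo_lt_hi.
have := lt_through (lo_le_pivot b i) (pivot_le_hi b i); rewrite lo_lt_hi /box_letter.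
by do 4 case: eqP.
Qed.

Lemma inter_dim_box_word a b :
  inter_dim (F a) (F b) = (d - conflicts (box_word (F a)) (box_word (F b)))%N.
Proof.
set P := [pred i | conflict (box_letter (F a) i) (box_letter (F b) i)].
rewrite /inter_dim (eq_card (B := [predC P])) => [|i]; last by rewrite !inE inter_side_lt.
rewrite conflicts_map count_enum -/P.
by have := cardC P; rewrite card_ord => card_sum; rewrite -[X in (X - _)%N]card_sum addKn.
Qed.

Lemma box_words_neighborly : (0 < d)%N ->
  neighborly_subcubes k d [seq box_word (F j) | j <- enum 'I_m.+1].
Proof.
move=> d_gt0.
have conflicts_bounds a b : a != b ->
    (0 < conflicts (box_word (F a)) (box_word (F b)) <= k)%N.
  move=> neq; have [_ [lo_dim hi_dim]] := HF.2 _ _ neq.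
  rewrite inter_dim_box_word in lo_dim hi_dim.
  have := conflicts_le_size (box_word (F a)) (box_word (F b)).
  by rewrite size_map size_enum_ord; lia.
split; first split.
- rewrite map_inj_uniq ?enum_uniq // => a b eq_ab; apply/eqP; apply: contraT.
  by move/conflicts_bounds; rewrite eq_ab conflicts_refl.
- by move=> _ /mapP[j _ ->]; rewrite size_map size_enum_ord.
- move=> _ _ /mapP[a _ ->] /mapP[b _ ->] neq.
  by have /conflicts_bounds/andP[] : a != b by apply: contraNneq neq => ->.
- move=> _ _ /mapP[a _ ->] /mapP[b _ ->].
  have [->|/conflicts_bounds/andP[]//] := eqVneq a b; by rewrite conflicts_refl.
Qed.

End BoxWords.

Theorem corollary1 (R : realType) (eps : R) (heps : 0 < eps) :
  exists delta : R, 0 < delta /\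
    forall k d : nat, (0 < k)%N -> (k <= d)%N ->
      k%:R <= (1 - eps) * d%:R ->
      n_le k d ((2 - delta) ^+ d).
Proof.
have [N N_gt0 epsN] : exists2 N, (0 < N)%N & 1 <= eps * N%:R.
  have inv_gt0 : 0 < eps^-1 by rewrite invr_gt0.
  have := archi_boundP (ltW inv_gt0); set N := Num.bound _ => N_gt.
  exists N; first by rewrite -(ltr0n R); apply: lt_trans N_gt.
  by rewrite -(ler_pM2l inv_gt0) mulr1 mulKf ?gt_eqF // ltW.
have [delta /andP[delta_gt0 delta_le2] bound] := neighborly_subcubes_exp_bound R N_gt0.
exists delta; split => // k d k_gt0 kd hk [|m] F HF.
  by rewrite exprn_ge0 // subr_ge0.
have dk : (d <= N * (d - k))%N.
  rewrite -(ler_nat R) natrM natrB //.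
  have : d%:R <= eps * N%:R * d%:R by rewrite ler_peMl ?ler0n.
  have : N%:R * (eps * d%:R) <= N%:R * (d%:R - k%:R) by rewrite ler_wpM2l ?ler0n //; lra.
  lra.
have := bound _ _ _ kd dk (box_words_neighborly HF (leq_trans k_gt0 kd)).
by rewrite size_map size_enum_ord.
Qed.
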